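(* Let $G$ be a multigraph in which each edge $\{u,v\}$ appears at most twice in $E(G)$, and let $\mathsf{VC}$ be a vertex cover of $G$. Assume every vertex of $G$ has even degree. Then there exists a multiset $\mathcal{C}$ of cycles in $G$ such that: (1) at most $2|\mathsf{VC}|^2$ cycles in $\mathcal{C}$ have length other than $4$; (2) the cycles in $\mathcal{C}$ of length other than $4$ are simple; (3) the multiset sum $\biguplus_{C\in\mathcal{C}}E(C)$ equals $E(G)$ as multisets.
   Context: A path in a multigraph is a sequence $(v_0,\dots,v_\ell)$ of vertices with $\{v_i,v_{i+1}\}$ an edge for all $0\le i<\ell$ (vertices and edges may repeat); its length is $\ell$. A cycle is a path with $v_0=v_\ell$; it is simple if $v_0,\dots,v_{\ell-1}$ are pairwise distinct. For a cycle $C=(v_0,\dots,v_\ell)$, $E(C)$ is the multiset $\{\{v_i,v_{i+1}\}:0\le i<\ell\}$ (with repetition). Degrees count edges with multiplicity. *)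

From mathcomp Require Import all_boot.
Set Implicit Arguments. Unset Strict Implicit. Unset Printing Implicit Defensive.

(* A loopless multigraph on a finite vertex type T is given by an edge-
   multiplicity function m : T -> T -> nat, with m x y = m y x and m x x = 0;
   m x y is the number of copies of the edge {x,y} in the multiset E(G). *)

Section Defs.
Variable T : finType.
Variable m : T -> T -> nat.

Definition mdeg (x : T) : nat := \sum_(y : T) m x y.

Definition vertex_cover (VC : {set T}) : Prop :=
  forall x y, 0 < m x y -> (x \in VC) || (y \in VC).

Definition is_cycle (s : seq T) : bool :=
  match s with
  | [::] => false
  | v0 :: r => path (fun x y => 0 < m x y) v0 r && (last v0 r == v0)
  end.
End Defs.

Section Defs2.
Variable T : eqType.

Definition cycle_length (s : seq T) : nat := (size s).-1.

Definition simple_cycle (s : seq T) : bool :=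
  match s with
  | [::] => false
  | v0 :: r => uniq (belast v0 r)
  end.

Definition edge_count (s : seq T) (x y : T) : nat :=
  count (fun p : T * T => ((p.1 == x) && (p.2 == y)) || ((p.1 == y) && (p.2 == x)))
        (zip s (behead s)).
End Defs2.

From mathcomp Require Import all_boot.
From mathcomp Require Import zify.
From Stdlib Require Import Classical.

Set Implicit Arguments. Unset Strict Implicit. Unset Printing Implicit Defensive.

(* Peel cycles off the multigraph one at a time, by induction on the number of
   edges.  A closed walk of length 4 that fits in the current multigraph is
   removed for free.  Otherwise a simple cycle is removed; it exists because all
   degrees are even.  Such removals are paid for by the potential
     sum over (u,v) in VC x VC of  m(u,v) + c_uv [u and v have a route],
   where a route is a walk u - w - v through a vertex w outside VC, and
   c_uu = 2, c_uv = 1 for u <> v; since m <= 2 the potential is at most 3|VC|^2.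
   Without a fitting 4-walk every pair of cover vertices has at most one route,
   and a simple cycle either uses an edge inside VC or passes through an outer
   vertex between two cover vertices (its neighbours lie in VC); either way the
   potential drops by at least 2.  Hence at most 3|VC|^2/2 cycles of length
   other than 4 are used. *)

Section NatSums.
Variable I : finType.
Implicit Types (P : pred I) (f g : I -> nat).

Lemma leq_sum_gap P f g i d :
  (forall j, P j -> g j <= f j) -> P i -> g i + d <= f i ->
  \sum_(j | P j) g j + d <= \sum_(j | P j) f j.
Proof.
move=> gf Pi gfi; rewrite (bigD1 i Pi) [X in _ <= X](bigD1 i Pi) /= addnAC.
by apply: leq_add => //; apply: leq_sum => j /andP [Pj _]; apply: gf.
Qed.

Lemma leq_sum_gap2 P f g i1 i2 d1 d2 :
  (forall j, P j -> g j <= f j) -> i1 != i2 -> P i1 -> P i2 ->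
  g i1 + d1 <= f i1 -> g i2 + d2 <= f i2 ->
  \sum_(j | P j) g j + d1 + d2 <= \sum_(j | P j) f j.
Proof.
move=> gf i12 Pi1 Pi2 gf1 gf2.
rewrite (bigD1 i1 Pi1) [X in _ <= X](bigD1 i1 Pi1) /=.
have : \sum_(j | P j && (j != i1)) g j + d2 <= \sum_(j | P j && (j != i1)) f j.
  apply: leq_sum_gap gf2; last by rewrite Pi2 eq_sym.
  by move=> j /andP [Pj _]; apply: gf.
lia.
Qed.

Lemma sum_nat_gt0P P f : 0 < \sum_(i | P i) f i -> exists2 i, P i & 0 < f i.
Proof.
have [i /andP [Pi fi] | none] := pickP [pred i | P i && (0 < f i)]; first by exists i.
rewrite big1 // => i Pi; apply/eqP.
by move: (none i); rewrite /= Pi lt0n => /negbFE.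
Qed.

Lemma sum_nat_gt1P P f : 1 < \sum_(i | P i) f i ->
  (exists2 i, P i & 1 < f i) \/
  (exists i j, [/\ P i, P j, i != j, 0 < f i & 0 < f j]).
Proof.
move=> sum_gt1.
have [i /andP [Pi fi] | small] := pickP [pred i | P i && (1 < f i)].
  by left; exists i.
right; have [i Pi fi] := sum_nat_gt0P (ltnW sum_gt1).
have fi1 : f i = 1 by move: (small i); rewrite /= Pi; lia.
move: sum_gt1; rewrite (bigD1 i Pi) fi1 /= => sum_gt1.
have [j /andP [Pj ji] fj] : exists2 j, P j && (j != i) & 0 < f j.
  by apply: sum_nat_gt0P; lia.
by exists i, j; split; rewrite // eq_sym.
Qed.

End NatSums.

Section EdgeCount.
Variable T : eqType.
Implicit Types (a b c d x y : T) (s : seq T).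

Definition same_edge c d a b : bool :=
  ((c == a) && (d == b)) || ((c == b) && (d == a)).

Lemma edge_count_cons2 c d s a b :
  edge_count [:: c, d & s] a b = same_edge c d a b + edge_count (d :: s) a b.
Proof. by []. Qed.

Lemma edge_count1 c a b : edge_count [:: c] a b = 0.
Proof. by []. Qed.

Lemma same_edgeC c d a b : same_edge c d a b = same_edge d c a b.
Proof. by rewrite /same_edge orbC andbC [(d == b) && _]andbC. Qed.

Lemma edge_countC s a b : edge_count s a b = edge_count s b a.
Proof. by apply: eq_count => p; rewrite orbC. Qed.

Lemma same_edge_trans c d c' d' a b :
  same_edge c d a b -> same_edge c' d' a b -> same_edge c d c' d'.
Proof.
rewrite /same_edge; case/orP => /andP [/eqP -> /eqP ->];
by case/orP => /andP [/eqP -> /eqP ->]; rewrite !eqxx ?orbT.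
Qed.

Lemma size_gt1_edge_count s : 1 < size s -> exists a b, 0 < edge_count s a b.
Proof.
by case: s => [|c [|d s]] // _; exists c, d; rewrite edge_count_cons2 /same_edge !eqxx.
Qed.

Lemma edge_count_mem s a b : 0 < edge_count s a b -> (a \in s) && (b \in s).
Proof.
elim: s => // c [|d s] IH //; rewrite edge_count_cons2.
case cd_ab: (same_edge c d a b) => /=; last first.
  by move=> /IH /andP [a_s b_s]; rewrite [a \in _]in_cons [b \in _]in_cons a_s b_s !orbT.
by case/orP: cd_ab => /andP [/eqP -> /eqP ->]; rewrite !inE !eqxx ?orbT.
Qed.

Lemma edge_count_uniq s a b : uniq s -> edge_count s a b <= 1.
Proof.
elim: s => // c [|d s] IH // /andP [c_ds uniq_ds]; rewrite edge_count_cons2.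
case cd_ab: (same_edge c d a b); last by rewrite IH.
case E: (edge_count (d :: s) a b) => [//|k].
have /andP [a_ds b_ds] : (a \in d :: s) && (b \in d :: s) by apply: edge_count_mem; rewrite E.
by case/orP: cd_ab c_ds => /andP [/eqP -> _]; rewrite ?a_ds ?b_ds.
Qed.

Lemma edge_count_rcons c s z a b :
  edge_count (rcons (c :: s) z) a b = edge_count (c :: s) a b + same_edge (last c s) z a b.
Proof.
elim: s c => [|d s IH] c /=; first by rewrite edge_count_cons2 edge_count1 addn0.
by rewrite edge_count_cons2 IH edge_count_cons2 addnA.
Qed.

End EdgeCount.

Section EdgeDegree.
Variable T : finType.
Implicit Types (c d x : T) (s : seq T).

Definition edge_deg s x := \sum_(y : T) edge_count s x y.

Lemma sum_same_edge c d x :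
  c != d -> \sum_(y : T) same_edge c d x y = (c == x) + (d == x).
Proof.
move=> cd.
have split_edge y : (same_edge c d x y : nat) = ((c == x) && (d == y)) + ((d == x) && (c == y)).
  rewrite /same_edge [(c == y) && _]andbC.
  case: (boolP ((c == x) && (d == y))) => [/andP [/eqP cx /eqP dy] | _] //.
  by rewrite -cx -dy [d == c]eq_sym (negbTE cd).
have sum_eq (b : bool) e : \sum_(y : T) (b && (e == y) : nat) = b.
  rewrite (bigD1 e) //= eqxx andbT big1 ?addn0 // => y.
  by rewrite eq_sym => /negbTE ->; rewrite andbF.
by rewrite (eq_bigr _ (fun y _ => split_edge y)) big_split /= !sum_eq.
Qed.

Lemma edge_deg_path c s x : path (fun x y => x != y) c s ->
  edge_deg (c :: s) x = count_mem x (belast c s) + count_mem x s.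
Proof.
rewrite /edge_deg; elim: s c => [|d s IH] c /=; first by rewrite big1.
move=> /andP [cd ds].
rewrite (eq_bigr _ (fun y _ => edge_count_cons2 c d s x y)) big_split /=.
by rewrite sum_same_edge // IH //= -!addnA; congr (_ + _); rewrite addnCA.
Qed.

(* Each visit of a closed walk to x contributes one edge in and one edge out. *)
Lemma edge_deg_closed_even c s x : path (fun x y => x != y) c s -> last c s = c ->
  ~~ odd (edge_deg (c :: s) x).
Proof.
move=> cs s_closed; rewrite edge_deg_path //.
have : count_mem x (c :: s) = count_mem x (belast c s) + (last c s == x).
  by rewrite lastI -cats1 count_cat /= addn0.
rewrite s_closed /= => count_cs.
have -> : count_mem x (belast c s) = count_mem x s.
  by apply/eqP; rewrite -(eqn_add2r (c == x)) -count_cs addnC.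
by rewrite addnn odd_double.
Qed.

End EdgeDegree.

Section Multigraph.
Variable T : finType.
Variable m : T -> T -> nat.
Hypothesis msym : forall x y, m x y = m y x.
Hypothesis mloopless : forall x, m x x = 0.
Implicit Types (a b c d x y z : T) (s : seq T).

Local Notation adj := (fun x y => 0 < m x y).

Definition fits_in (C : seq T) := forall a b, edge_count C a b <= m a b.

Definition closed_4walk (W : seq T) := [/\ is_cycle m W, cycle_length W = 4 & fits_in W].

Definition simple_subcycle (C : seq T) :=
  [/\ is_cycle m C, simple_cycle C, fits_in C & 1 < size C].

Lemma adj_neq x y : 0 < m x y -> x != y.
Proof. by move=> mxy; apply/eqP => xy; rewrite xy mloopless in mxy. Qed.

Lemma same_edge_mult c d a b : same_edge c d a b -> m a b = m c d.
Proof. by case/orP => /andP [/eqP <- /eqP <-] //; rewrite msym. Qed.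

Lemma edge_count_path_gt0 c s a b :
  path adj c s -> 0 < edge_count (c :: s) a b -> 0 < m a b.
Proof.
elim: s c => // d s IH c /= /andP [cd ds]; rewrite edge_count_cons2.
case cd_ab: (same_edge c d a b); first by rewrite (same_edge_mult cd_ab).
by rewrite add0n; apply: IH.
Qed.

Lemma cycle_edge_deg_even C x : is_cycle m C -> ~~ odd (edge_deg C x).
Proof.
case: C => // c s /andP [cs /eqP s_closed]; apply: edge_deg_closed_even s_closed.
by apply: sub_path cs => y z; apply: adj_neq.
Qed.

Lemma is_cycle_mono m' C : (forall x y, m' x y <= m x y) -> is_cycle m' C -> is_cycle m C.
Proof.
move=> m'm; case: C => // c s /andP [cs s_closed]; rewrite /= s_closed andbT.
by apply: sub_path cs => x y m'xy; apply: leq_trans m'xy (m'm x y).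
Qed.

(* Every edge of a simple cycle of length at least 3 is traversed once. *)
Lemma fits_in_simple y s : uniq (y :: s) -> 1 < size s -> path adj y (rcons s y) ->
  fits_in (y :: rcons s y).
Proof.
move=> uniq_ys size_s ys a b.
case E: (edge_count (y :: rcons s y) a b) => [//|k].
have mab : 0 < m a b by apply: (edge_count_path_gt0 ys); rewrite E.
suff : edge_count (y :: rcons s y) a b <= 1 by rewrite E; lia.
case: s uniq_ys size_s {ys E} => [|x [|x2 q]] // uniq_ys _.
rewrite -rcons_cons edge_count_rcons /=.
case last_ab: (same_edge (last x2 q) y a b); last by rewrite addn0 edge_count_uniq.
case/andP: uniq_ys => y_xq /andP [x_q _].
rewrite edge_count_cons2.
have -> : edge_count [:: x, x2 & q] a b = 0.
  case E: (edge_count [:: x, x2 & q] a b) => [//|k'].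
  have /andP [a_xq b_xq] : (a \in [:: x, x2 & q]) && (b \in [:: x, x2 & q]).
    by apply: edge_count_mem; rewrite E.
  by case/orP: last_ab y_xq => /andP [_ /eqP ->]; rewrite ?a_xq ?b_xq.
case yx_ab: (same_edge y x a b) => //.
case/orP: (same_edge_trans yx_ab last_ab) => /andP [/eqP yl /eqP xy].
- by rewrite yl in_cons mem_last orbT in y_xq.
- by rewrite xy mem_last in x_q.
Qed.

Lemma double_same_edge_le c d a b : 1 < m c d -> 2 * same_edge c d a b <= m a b.
Proof. by case cd_ab: (same_edge c d a b); rewrite // (same_edge_mult cd_ab) muln1. Qed.

Lemma double_same_edges_le c d c' d' a b : ~~ (same_edge c d a b && same_edge c' d' a b) ->
  1 < m c d -> 1 < m c' d' -> 2 * same_edge c d a b + 2 * same_edge c' d' a b <= m a b.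
Proof.
case cd_ab: (same_edge c d a b); case cd'_ab: (same_edge c' d' a b) => //= _ mcd mcd'.
- by rewrite (same_edge_mult cd_ab) muln0 addn0 muln1.
- by rewrite (same_edge_mult cd'_ab) muln0 add0n muln1.
Qed.

Lemma simple_subcycle2 x z : 1 < m x z -> simple_subcycle [:: x; z; x].
Proof.
move=> mxz; have mxz0 : 0 < m x z by apply: ltnW.
split => //.
- by rewrite /is_cycle /= mxz0 msym mxz0 eqxx.
- by rewrite /simple_cycle /= inE adj_neq.
- move=> a b; rewrite !edge_count_cons2 edge_count1 addn0 (same_edgeC z x) addnn -mul2n.
  exact: double_same_edge_le.
Qed.

Hypothesis heven : forall x, ~~ odd (mdeg m x).

(* The end of a simple path has even degree, hence a second edge; following it
   either extends the path or closes a simple cycle. *)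
Lemma extend_path_or_close x y0 q : uniq [:: x, y0 & q] -> path adj x (y0 :: q) ->
  (exists C, simple_subcycle C) \/
  (exists2 y, uniq [:: y, x, y0 & q] & path adj y [:: x, y0 & q]).
Proof.
move=> uniq_xq xq.
have mxy0 : 0 < m x y0 by case/andP: xq.
have deg_x : 1 < mdeg m x.
  have : 0 < mdeg m x by rewrite /mdeg (bigD1 y0) //= ltn_addr.
  by move: (heven x); case: (mdeg m x) => [|[|n]].
case: (sum_nat_gt1P deg_x) => [[z _ mxz] | [z1 [z2 [_ _ z12 mxz1 mxz2]]]].
  by left; exists [:: x; z; x]; apply: simple_subcycle2.
have [y mxy yy0] : exists2 y, 0 < m x y & y != y0.
  case: (eqVneq z1 y0) => [z1y0|]; last by exists z1.
  by exists z2; rewrite // -z1y0 eq_sym.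
case: (boolP (y \in y0 :: q)) => y_q; last first.
  right; exists y; first by rewrite [uniq _]/= in_cons negb_or y_q andbT eq_sym adj_neq.
  by rewrite /= -/(path adj x (y0 :: q)) xq andbT msym.
left; have {}y_q : y \in q by move: y_q; rewrite inE (negbTE yy0).
case/splitPr: y_q uniq_xq xq => q1 q2 uniq_xq xq.
set s := [:: x, y0 & q1].
move: uniq_xq; rewrite -[[:: x, y0 & _]]/(s ++ y :: q2) cat_uniq.
case/and3P => uniq_s /norP [y_s _] _.
move: xq; rewrite -[_ :: _ ++ _]/((y0 :: q1) ++ y :: q2) cat_path.
case/and3P => /andP [mxy0' y0q1] mly _.
have sy : path adj y (rcons s y).
  rewrite rcons_path mly andbT /= msym mxy /=; exact/andP.
exists (y :: rcons s y); split.
- by rewrite /is_cycle sy last_rcons eqxx.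
- by rewrite /simple_cycle belast_rcons /= y_s.
- by apply: fits_in_simple; rewrite //= y_s.
- by rewrite /= size_rcons.
Qed.

(* A simple path cannot be extended more than #|T| times. *)
Lemma exists_simple_subcycle x y : 0 < m x y -> exists C, simple_subcycle C.
Proof.
move=> mxy.
suff ext k x' y0 q : #|T| <= size q + k -> uniq [:: x', y0 & q] -> path adj x' (y0 :: q) ->
    exists C, simple_subcycle C.
  by apply: (ext #|T| x y [::]); rewrite //= ?inE andbT ?adj_neq ?mxy.
elim: k x' y0 q => [|k IH] x' y0 q size_q uniq_q path_q.
  case: (extend_path_or_close uniq_q path_q) => // -[z uniq_zq _]; exfalso.
  have size_zq : size [:: z, x', y0 & q] <= #|T| by rewrite -(card_uniqP uniq_zq) max_card.
  by have /= := leq_trans size_zq size_q; lia.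
case: (extend_path_or_close uniq_q path_q) => // -[z uniq_zq path_zq].
by apply: (IH z x' (y0 :: q)); rewrite //= addSnnS.
Qed.

End Multigraph.

Section Potential.
Variable T : finType.
Variable VC : {set T}.
Implicit Types (u v w : T) (m : T -> T -> nat).

(* Number of edge-disjoint walks u - w - v; when u = v such a walk uses the
   edge {u,w} twice. *)
Definition route m u v w := if u == v then (m u w)./2 else minn (m u w) (m v w).

Definition routes m u v := \sum_(w | w \notin VC) route m u v w.

Definition pair_weight m u v := m u v + (if u == v then 2 else 1) * (0 < routes m u v).

Definition potential m := \sum_(p in setX VC VC) pair_weight m p.1 p.2.

Lemma routeC m u v w : route m u v w = route m v u w.
Proof. by rewrite /route eq_sym; case: eqP => [->|_] //; rewrite minnC. Qed.

Lemma potential_le m : (forall x, m x x = 0) -> (forall x y, m x y <= 2) ->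
  potential m <= 3 * #|VC| ^ 2.
Proof.
move=> mloopless mle2.
apply: leq_trans (_ : \sum_(p in setX VC VC) 3 <= _).
  apply: leq_sum => -[u v] _ /=; rewrite /pair_weight.
  case: eqP => [->|_]; first by rewrite mloopless; case: (0 < _).
  by have := mle2 u v; lia.
by rewrite sum_nat_const cardsX mulnn mulnC.
Qed.

Section Monotone.
Variables m m' : T -> T -> nat.
Hypothesis m'_le_m : forall x y, m' x y <= m x y.


Lemma route_mono u v w : route m' u v w <= route m u v w.
Proof.
rewrite /route; case: (u == v); first exact: half_leq.
by rewrite leq_min !geq_min !m'_le_m ?orbT.
Qed.

Lemma routes_mono u v : routes m' u v <= routes m u v.
Proof. by apply: leq_sum => w _; apply: route_mono. Qed.

Lemma pair_weight_mono u v : pair_weight m' u v <= pair_weight m u v.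
Proof.
rewrite /pair_weight; have := routes_mono u v; have := m'_le_m u v.
by case: (u == v); lia.
Qed.

Lemma potential_mono : potential m' <= potential m.
Proof. by apply: leq_sum => p _; apply: pair_weight_mono. Qed.

Lemma pair_weight_drop_mult u v : m' u v < m u v -> pair_weight m' u v < pair_weight m u v.
Proof.
rewrite /pair_weight; have := routes_mono u v.
by case: (u == v); lia.
Qed.

Lemma pair_weight_drop_routes u v : routes m' u v < routes m u v -> routes m u v <= 1 ->
  pair_weight m' u v + (if u == v then 2 else 1) <= pair_weight m u v.
Proof. by rewrite /pair_weight; have := m'_le_m u v; case: (u == v); lia. Qed.

Lemma potential_drop_inner a b : a \in VC -> b \in VC -> a != b ->
  m' a b < m a b -> m' b a < m b a -> potential m' + 2 <= potential m.
Proof.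
move=> aVC bVC ab drop_ab drop_ba.
have drop x y : m' x y < m x y -> pair_weight m' x y + 1 <= pair_weight m x y.
  by rewrite addn1; apply: pair_weight_drop_mult.
rewrite -[2]/(1 + 1) addnA.
apply: (leq_sum_gap2 (i1 := (a, b)) (i2 := (b, a))).
- by move=> p _; apply: pair_weight_mono.
- by rewrite xpair_eqE (negbTE ab).
- by rewrite in_setX aVC bVC.
- by rewrite in_setX aVC bVC.
- exact: drop.
- exact: drop.
Qed.

(* When no pair of cover vertices has two routes, destroying a route through
   the outer vertex [w] leaves its pair without routes. *)
Lemma potential_drop_outer w u1 u2 : w \notin VC -> u1 \in VC -> u2 \in VC ->
  (forall u v, u \in VC -> v \in VC -> routes m u v <= 1) ->
  route m' u1 u2 w < route m u1 u2 w -> potential m' + 2 <= potential m.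
Proof.
move=> wVC u1VC u2VC routes_le1 drop_w.
have drop u v : u \in VC -> v \in VC -> route m' u v w < route m u v w ->
    pair_weight m' u v + (if u == v then 2 else 1) <= pair_weight m u v.
  move=> uVC vVC drop_uv; apply: pair_weight_drop_routes (routes_le1 u v uVC vVC).
  rewrite -addn1; apply: (leq_sum_gap (i := w)) => //; last by rewrite addn1.
  by move=> x _; apply: route_mono.
have weight_mono p : p \in setX VC VC -> pair_weight m' p.1 p.2 <= pair_weight m p.1 p.2.
  by move=> _; apply: pair_weight_mono.
case: (eqVneq u1 u2) => [u12 | u12].
  subst u2.
  apply: (leq_sum_gap (i := (u1, u1))) weight_mono _ _; first by rewrite in_setX u1VC.
  by have := drop u1 u1 u1VC u1VC drop_w; rewrite eqxx.
rewrite -[2]/(1 + 1) addnA.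
apply: (leq_sum_gap2 (i1 := (u1, u2)) (i2 := (u2, u1))) weight_mono _ _ _ _ _.
- by rewrite xpair_eqE (negbTE u12).
- by rewrite in_setX u1VC u2VC.
- by rewrite in_setX u1VC u2VC.
- by have := drop u1 u2 u1VC u2VC drop_w; rewrite (negbTE u12).
- have := drop u2 u1 u2VC u1VC; rewrite [u2 == u1]eq_sym (negbTE u12).
  by apply; rewrite (routeC m) (routeC m').
Qed.

End Monotone.
End Potential.

Definition mremove (T : eqType) (m : T -> T -> nat) (C : seq T) x y :=
  m x y - edge_count C x y.

Definition msize (T : finType) (m : T -> T -> nat) := \sum_(p : T * T) m p.1 p.2.

Section Removal.
Variable T : finType.
Variable m : T -> T -> nat.
Hypothesis msym : forall x y, m x y = m y x.
Hypothesis mloopless : forall x, m x x = 0.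
Variable C : seq T.
Hypothesis fitsC : fits_in m C.

Lemma mremove_le x y : mremove m C x y <= m x y.
Proof. exact: leq_subr. Qed.

Lemma mremove_sym x y : mremove m C x y = mremove m C y x.
Proof. by rewrite /mremove msym edge_countC. Qed.

Lemma mremove_loopless x : mremove m C x x = 0.
Proof. by rewrite /mremove mloopless. Qed.

Lemma edge_count_mremoveK x y : edge_count C x y + mremove m C x y = m x y.
Proof. exact: subnKC. Qed.

Lemma mdeg_mremove x : mdeg m x = mdeg (mremove m C) x + edge_deg C x.
Proof.
rewrite /mdeg /edge_deg -big_split; apply: eq_bigr => y _.
by rewrite /= addnC edge_count_mremoveK.
Qed.

Lemma msize_mremove a b : 0 < edge_count C a b -> msize (mremove m C) < msize m.
Proof.
move=> ab_C; rewrite -addn1 /msize.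
apply: (leq_sum_gap (i := (a, b))) => // [p _|]; first exact: mremove_le.
by rewrite /mremove /=; have := fitsC a b; lia.
Qed.

End Removal.

Section FourWalks.
Variable T : finType.
Variable m : T -> T -> nat.
Hypothesis msym : forall x y, m x y = m y x.
Hypothesis mloopless : forall x, m x x = 0.
Implicit Types (u v w : T).

Lemma closed_4walk_double_pair u v w : u != v -> 1 < m u w -> 1 < m v w ->
  closed_4walk m [:: u; w; v; w; u].
Proof.
move=> uv muw mvw.
have muw0 := ltnW muw; have mvw0 := ltnW mvw.
have uw := adj_neq mloopless muw0.
split => //; first by rewrite /is_cycle /= (msym w v) (msym w u) muw0 mvw0 eqxx.
move=> a b; rewrite !edge_count_cons2 edge_count1 addn0 (same_edgeC w v) (same_edgeC w u).
have : ~~ (same_edge u w a b && same_edge v w a b).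
  apply/negP => /andP [uw_ab vw_ab]; move: (same_edge_trans uw_ab vw_ab).
  by rewrite /same_edge (negbTE uv) (negbTE uw).
by move/(double_same_edges_le msym)/(_ muw mvw); lia.
Qed.

Lemma closed_4walk_square u v w1 w2 : u != v -> w1 != w2 ->
  0 < m u w1 -> 0 < m v w1 -> 0 < m u w2 -> 0 < m v w2 ->
  closed_4walk m [:: u; w1; v; w2; u].
Proof.
move=> uv w12 muw1 mvw1 muw2 mvw2.
have walk : path (fun x y => 0 < m x y) u (rcons [:: w1; v; w2] u).
  by rewrite /= muw1 (msym w1 v) mvw1 mvw2 (msym w2 u) muw2.
split => //; first by rewrite /is_cycle walk /= eqxx.
apply: (fits_in_simple msym) walk => //.
have neq := adj_neq mloopless.
by rewrite /= !inE !negb_or uv w12 (neq _ _ muw1) (neq _ _ muw2) (neq _ _ mvw2) eq_sym (neq _ _ mvw1).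
Qed.

Hypothesis mle2 : forall x y, m x y <= 2.
Variable VC : {set T}.

Lemma routes_le1 u v : ~ (exists W, closed_4walk m W) -> routes VC m u v <= 1.
Proof.
move=> no4; rewrite leqNgt; apply/negP.
case/sum_nat_gt1P => [[w _] | [w1 [w2 [_ _ w12]]]]; rewrite /route.
- case: eqP => [_ | /eqP uv]; first by have := mle2 u w; lia.
  rewrite leq_min => /andP [muw mvw]; apply: no4.
  by exists [:: u; w; v; w; u]; apply: closed_4walk_double_pair.
- case: eqP => [_ | /eqP uv]; rewrite ?half_gt0 ?leq_min => r1 r2; apply: no4.
    by exists [:: w1; u; w2; u; w1]; apply: closed_4walk_double_pair; rewrite // msym.
  case/andP: r1 => muw1 mvw1; case/andP: r2 => muw2 mvw2.
  by exists [:: u; w1; v; w2; u]; apply: closed_4walk_square.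
Qed.

End FourWalks.

Section Decomposition.
Variable T : finType.
Variable VC : {set T}.

Section CycleRemoval.
Variable m : T -> T -> nat.
Hypothesis msym : forall x y, m x y = m y x.
Hypothesis mloopless : forall x, m x x = 0.
Hypothesis mle2 : forall x y, m x y <= 2.
Hypothesis mVC : vertex_cover m VC.
Variable C : seq T.
Hypotheses (cycC : is_cycle m C) (fitsC : fits_in m C) (sizeC : 1 < size C).

(* A cycle either has an edge inside the cover, or passes through an outer
   vertex between two cover vertices. *)
Lemma potential_drop_cycle : ~ (exists W, closed_4walk m W) ->
  potential VC (mremove m C) + 2 <= potential VC m.
Proof.
move=> no4; have m'_le_m := mremove_le m C.
have drop x y : 0 < edge_count C x y -> mremove m C x y < m x y.
  by rewrite /mremove; have := fitsC x y; lia.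
have [a [b ab_C]] := size_gt1_edge_count sizeC.
have mab : 0 < m a b := leq_trans ab_C (fitsC a b).
case: (boolP ((a \in VC) && (b \in VC))) => [/andP [aVC bVC] | not_inner].
  apply: (potential_drop_inner m'_le_m aVC bVC (adj_neq mloopless mab)); apply: drop => //.
  by rewrite edge_countC.
have [w [z [wVC wz_C]]] : exists w z, w \notin VC /\ 0 < edge_count C w z.
  move: (mVC mab) not_inner; case aVC: (a \in VC); case bVC: (b \in VC) => //= _ _.
  - by exists b, a; rewrite bVC edge_countC.
  - by exists a, b; rewrite aVC.
have nbr_VC y : 0 < edge_count C w y -> y \in VC.
  by move=> wy_C; move: (mVC (leq_trans wy_C (fitsC w y))); rewrite (negbTE wVC).
have deg_w : 1 < edge_deg C w.
  have : 0 < edge_deg C w by rewrite /edge_deg (bigD1 z) //= ltn_addr.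
  by move: (cycle_edge_deg_even mloopless w cycC); case: edge_deg => [|[]].
have routes_le1 u v : u \in VC -> v \in VC -> routes VC m u v <= 1.
  by move=> _ _; apply: routes_le1.
case: (sum_nat_gt1P deg_w) => [[u _ wu_C] | [u1 [u2 [_ _ u12 wu1_C wu2_C]]]].
- have uVC := nbr_VC u (ltnW wu_C).
  apply: (potential_drop_outer m'_le_m wVC uVC uVC routes_le1).
  by rewrite /route eqxx /mremove edge_countC msym; have := fitsC w u; lia.
- apply: (potential_drop_outer m'_le_m wVC (nbr_VC u1 wu1_C) (nbr_VC u2 wu2_C) routes_le1).
  rewrite /route (negbTE u12) /mremove !(edge_countC C _ w) !(msym _ w).
  by have := fitsC w u1; have := fitsC w u2; lia.
Qed.

End CycleRemoval.

Definition cycle_decomposition m (cs : seq (seq T)) :=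
  all (is_cycle m) cs /\ forall x y, \sum_(C <- cs) edge_count C x y = m x y.

Lemma cycle_decomposition_cons m C cs : is_cycle m C -> fits_in m C ->
  cycle_decomposition (mremove m C) cs -> cycle_decomposition m (C :: cs).
Proof.
move=> cycC fitsC [cyc_cs sum_cs]; split.
  by rewrite /= cycC; apply: sub_all cyc_cs => C'; apply: is_cycle_mono (mremove_le m C).
by move=> x y; rewrite big_cons sum_cs edge_count_mremoveK.
Qed.

Lemma exists_cycle_decomposition m :
  (forall x y, m x y = m y x) -> (forall x, m x x = 0) -> (forall x y, m x y <= 2) ->
  vertex_cover m VC -> (forall x, ~~ odd (mdeg m x)) ->
  exists cs, [/\ cycle_decomposition m cs,
    (forall C, C \in cs -> cycle_length C != 4 -> simple_cycle C) &
    2 * count (fun C => cycle_length C != 4) cs <= potential VC m].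
Proof.
have [n] := ubnP (msize m); elim: n m => // n IH m size_m msym mloopless mle2 mVC meven.
have [[a b] /= mab | no_edge] := pickP (fun p : T * T => 0 < m p.1 p.2); last first.
  exists [::]; split => //; split => // x y; rewrite big_nil.
  by move: (no_edge (x, y)); rewrite /= lt0n => /negbFE /eqP.
have peel C : is_cycle m C -> fits_in m C -> 1 < size C ->
  exists cs, [/\ cycle_decomposition (mremove m C) cs,
    (forall C, C \in cs -> cycle_length C != 4 -> simple_cycle C) &
    2 * count (fun C => cycle_length C != 4) cs <= potential VC (mremove m C)].
  move=> cycC fitsC sizeC; have [a' [b' ab_C]] := size_gt1_edge_count sizeC.
  apply: IH.
  - by have := msize_mremove fitsC ab_C; lia.
  - exact: mremove_sym.
  - exact: mremove_loopless.
  - by move=> x y; apply: leq_trans (mremove_le m C x y) (mle2 x y).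
  - by move=> x y /leq_trans/(_ (mremove_le m C x y)); apply: mVC.
  - by move=> x; move: (meven x); rewrite (mdeg_mremove fitsC) oddD (negbTE (cycle_edge_deg_even mloopless x cycC)) addbF.
case: (classic (exists W, closed_4walk m W)) => [[W [cycW lenW fitsW]] | no4].
  have sizeW : 1 < size W by move: lenW; rewrite /cycle_length; case: size => [|[]].
  have [cs [dec_cs simple_cs count_cs]] := peel W cycW fitsW sizeW.
  exists (W :: cs); split.
  - exact: cycle_decomposition_cons.
  - by move=> C; rewrite inE => /orP [/eqP -> | /simple_cs]; rewrite ?lenW.
  - rewrite /= lenW eqxx add0n (leq_trans count_cs) //.
    exact: potential_mono (mremove_le m W).

have [C [cycC simpleC fitsC sizeC]] := exists_simple_subcycle msym mloopless meven mab.
have [lenC | lenC] := eqVneq (cycle_length C) 4; first by case: no4; exists C.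
have [cs [dec_cs simple_cs count_cs]] := peel C cycC fitsC sizeC.
exists (C :: cs); split.
- exact: cycle_decomposition_cons.
- by move=> C'; rewrite inE => /orP [/eqP -> | /simple_cs].
- have drop := potential_drop_cycle msym mloopless mle2 mVC cycC fitsC sizeC no4.
  by rewrite /= lenC add1n mulnS addnC (leq_trans _ drop) // leq_add2r.
Qed.

End Decomposition.

Theorem mainTheorem8 (T : finType) (m : T -> T -> nat) (VC : {set T})
  (msym : forall x y, m x y = m y x)
  (mloopless : forall x, m x x = 0)
  (mle2 : forall x y, m x y <= 2)
  (hVC : vertex_cover m VC)
  (heven : forall x, ~~ odd (mdeg m x)) :
  exists cs : seq (seq T),
    [/\ all (is_cycle m) cs,
        count (fun C => cycle_length C != 4) cs <= 2 * #|VC| ^ 2,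
        (forall C, C \in cs -> cycle_length C != 4 -> simple_cycle C) &
        (forall x y, \sum_(C <- cs) edge_count C x y = m x y)].
Proof.
have [cs [[cyc_cs sum_cs] simple_cs count_cs]] :=
  exists_cycle_decomposition msym mloopless mle2 hVC heven.
exists cs; split => //.
by have := leq_trans count_cs (potential_le VC mloopless mle2); lia.
Qed.
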